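(* Let $K\ge2$ and let $(\mathbf{H},D,\mathbf{Z})$ follow the replication csmGmm (r-csmGmm) described in the context. Let $\mathcal{H}^{rep}_a=\{(1,\dots,1)^T,(-1,\dots,-1)^T\}\subset\{-1,0,1\}^K$ and $\mathcal{H}^{rep}_0=\{-1,0,1\}^K\setminus\mathcal{H}^{rep}_a$, and define $$lfdr(\mathbf{z})=\Pr(\mathbf{H}\in\mathcal{H}^{rep}_0\mid\mathbf{Z}=\mathbf{z})=\frac{\sum_{l:\mathbf{h}^l\in\mathcal{H}^{rep}_0}\sum_{m=1}^{M_{b_l}}\pi_{b_l m}\prod_{k=1}^K\phi(z_k-h^l_k\mu_{b_l,m,k})}{\sum_{l=0}^{3^K-1}\sum_{m=1}^{M_{b_l}}\pi_{b_l m}\prod_{k=1}^K\phi(z_k-h^l_k\mu_{b_l,m,k})},$$ with $\phi$ the standard normal density. Then for any $k\in\{1,\dots,K\}$, with the other coordinates held fixed: $lfdr(\mathbf{z})$ is non-increasing in $z_k$ for $z_k>0$ provided $z_{k'}>0$ for all $k'$; and $lfdr(\mathbf{z})$ is non-decreasing in $z_k$ for $z_k<0$ provided $z_{k'}<0$ for all $k'$.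
   Context: The latent configuration is $\mathbf{H}\in\{-1,0,1\}^K$; enumerate the $3^K$ configurations as $\mathbf{h}^0,\dots,\mathbf{h}^{3^K-1}$ with $\mathbf{h}^0=(0,\dots,0)^T$, and let $b_l=\sum_{k=1}^K2^{K-k}|h^l_k|$ (the $k$-th binary digit of $b_l$ is $|h^l_k|$). csmGmm: for each $b\in\{0,\dots,2^K-1\}$ there is a positive integer $M_b$ ($M_0=1$), mean-magnitude vectors $\boldsymbol{\mu}_{b,m}=(\mu_{b,m,1},\dots,\mu_{b,m,K})^T$, $m=1,\dots,M_b$, with $\mu_{b,m,k}=0$ if the $k$-th binary digit of $b$ is $0$ and $\mu_{b,m,k}>0$ otherwise, and $\mu_{2^K-1,m,k}\ge\mu_{b,m',k}$ for all $b<2^K-1$ and all $m,m',k$; and probabilities $\Pr(\mathbf{H}=\mathbf{h}^l,D=m)=\pi_{b_l m}\ge0$ (shared across configurations with equal $b_l$) summing to one. Conditional on $\mathbf{H}=\mathbf{h}^l$, $D=m$, $\mathbf{Z}\sim N_K(\mathrm{diag}(\mathbf{h}^l)\boldsymbol{\mu}_{b_l,m},\mathbf{I}_K)$. The r-csmGmm is this model with the additional restriction $M_{2^K-1}=1$. The replication composite null for parameters $\theta_1,\dots,\theta_K$ is $\{\bigcup_k\theta_k=0\}\cup\{\bigcup_{k\ne k'}\mathrm{sign}(\theta_k)\ne\mathrm{sign}(\theta_{k'})\}$, corresponding to $\mathbf{H}\in\mathcal{H}^{rep}_0$. *)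

From HB Require Import structures.
From mathcomp Require Import all_boot all_order all_algebra.
From mathcomp Require Import all_classical all_reals all_analysis.
Set Implicit Arguments. Unset Strict Implicit. Unset Printing Implicit Defensive.
Import Order.TTheory GRing.Theory Num.Theory.
Local Open Scope ring_scope.

Definition phi (R : realType) (x : R) : R :=
  expR (- (x ^+ 2) / 2) / Num.sqrt (2 * pi).

(* A latent configuration h in {-1,0,1}^K is encoded as h : {ffun 'I_K -> 'I_3},
   with coordinate value hval h k = (h k) - 1, i.e. 0 |-> -1, 1 |-> 0, 2 |-> 1. *)
Definition config (K : nat) := {ffun 'I_K -> 'I_3}.

Definition hval (R : realType) (K : nat) (h : config K) (k : 'I_K) : R :=
  (nat_of_ord (h k))%:R - 1.

(* The pattern b_l, encoded as the set of coordinates k with |h_k| = 1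
   (the set of k whose binary digit of b_l is 1). *)
Definition supp (R : realType) (K : nat) (h : config K) : {set 'I_K} :=
  [set k | hval R h k != 0].

Definition in_Ha (R : realType) (K : nat) (h : config K) : bool :=
  [forall k, hval R h k == 1] || [forall k, hval R h k == -1].

(* csmGmm parameters: M b (number of mixture components for pattern b; components
   indexed by m = 0 .. M b - 1), mu b m k (mean magnitudes), pi b m (probabilities). *)
Definition csmGmm (R : realType) (K : nat) (M : {set 'I_K} -> nat)
    (mu : {set 'I_K} -> nat -> 'I_K -> R) (p : {set 'I_K} -> nat -> R) : Prop :=
  (forall b, (0 < M b)%N) /\
      M (finset.set0 : {set 'I_K}) = 1%N /\
      (forall b m k, (m < M b)%N -> (k \notin b -> mu b m k = 0)
                                     /\ (k \in b -> 0 < mu b m k)) /\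
      (forall b m m' k, b != [set: 'I_K] -> (m < M [set: 'I_K])%N -> (m' < M b)%N ->
                        mu b m' k <= mu [set: 'I_K] m k) /\
      (forall b m, (m < M b)%N -> 0 <= p b m)
    /\ \sum_(h : config K) \sum_(m < M (supp R h)) p (supp R h) m = 1.

Definition r_csmGmm (R : realType) (K : nat) (M : {set 'I_K} -> nat)
    (mu : {set 'I_K} -> nat -> 'I_K -> R) (p : {set 'I_K} -> nat -> R) : Prop :=
  csmGmm M mu p /\ M [set: 'I_K] = 1%N.

Definition dens_h (R : realType) (K : nat) (M : {set 'I_K} -> nat)
    (mu : {set 'I_K} -> nat -> 'I_K -> R) (p : {set 'I_K} -> nat -> R)
    (h : config K) (z : 'I_K -> R) : R :=
  \sum_(m < M (supp R h))
     p (supp R h) m * \prod_(k < K) phi (z k - hval R h k * mu (supp R h) m k).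

Definition lfdr (R : realType) (K : nat) (M : {set 'I_K} -> nat)
    (mu : {set 'I_K} -> nat -> 'I_K -> R) (p : {set 'I_K} -> nat -> R)
    (z : 'I_K -> R) : R :=
  (\sum_(h : config K | ~~ in_Ha R h) dens_h M mu p h z)
  / (\sum_(h : config K) dens_h M mu p h z).

From HB Require Import structures.
From mathcomp Require Import all_boot all_order all_algebra.
From mathcomp Require Import all_classical all_reals all_analysis.
From mathcomp Require Import ring lra.
Set Implicit Arguments. Unset Strict Implicit. Unset Printing Implicit Defensive.
Import Order.TTheory GRing.Theory Num.Theory.
Local Open Scope ring_scope.

(* Pairing every configuration h with its opposite -h, the mixture density at z
   becomes phi(z) * sum_m w_(h,m) cosh <z, mu_(h,m)> with nonnegative weights, so
   lfdr = 1 - A/T with A the alternative and T the total density.  Under the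
   r-csmGmm the alternative has the single mean vector +-mu_full, which dominates
   every other mean coordinatewise.  Hence for 0 <= z <= z' the quantity
   v = <z, mu_full> bounds |u| = |<z, mu_(g,m)>| and grows by at least |u' - u|,
   which gives cosh v cosh u' <= cosh v' cosh u term by term, i.e.
   A(z) T(z') <= A(z') T(z).  The negative orthant follows from lfdr(-z) = lfdr(z). *)

Section Cosh.
Variable R : realType.

Definition cosh (x : R) : R := (expR x + expR (- x)) / 2.

Lemma coshN (x : R) : cosh (- x) = cosh x.
Proof. by rewrite /cosh opprK addrC. Qed.

Lemma ler_cosh (a b : R) : `|a| <= b -> cosh a <= cosh b.
Proof.
wlog a_ge0 : a / 0 <= a.
  move=> ler_cosh_ge0; case: (lerP 0 a) => [|/ltW a_le0]; first exact: ler_cosh_ge0.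
  by rewrite -coshN -normrN; apply: ler_cosh_ge0; rewrite oppr_ge0.
rewrite ger0_norm // => le_ab.
have expRBN : expR (- a) - expR (- b) = expR (- a - b) * (expR b - expR a).
  by rewrite mulrBr -!expRD; congr (expR _ - expR _); ring.
have expR_le1_ab : expR (- a - b) <= 1 by rewrite expR_le1; lra.
have : expR (- a - b) * (expR b - expR a) <= expR b - expR a.
  by rewrite ler_piMl ?subr_ge0 ?ler_expR // ltW ?expR_gt0.
rewrite /cosh ler_pM2r //; lra.
Qed.

Lemma mul_cosh (a b : R) : cosh a * cosh b = (cosh (a + b) + cosh (a - b)) / 2.
Proof. by rewrite /cosh !opprD opprK !expRD; field. Qed.

(* After expanding both products into sums, this is [|v +- u'| <= v' +- u]. *)
Lemma cosh_cross (u v u' v' : R) :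
  `|u| <= v -> `|u' - u| <= v' - v -> cosh v * cosh u' <= cosh v' * cosh u.
Proof.
move=> /ler_normlP [? ?] /ler_normlP [? ?].
rewrite !mul_cosh ler_pM2r //.
by apply: lerD; apply: ler_cosh; apply/ler_normlP; split; lra.
Qed.

End Cosh.

Lemma ler_compl_ratio (R : realFieldType) (a t a' t' : R) :
  0 < t -> 0 < t' -> a * t' <= a' * t -> (t' - a') / t' <= (t - a) / t.
Proof. by move=> t_gt0 t'_gt0 cross; rewrite ler_pdivrMr // mulrAC ler_pdivlMr //; nra. Qed.

Section StandardNormal.
Variable R : realType.

Lemma phi_gt0 (x : R) : 0 < phi x.
Proof. by rewrite divr_gt0 ?expR_gt0 // sqrtr_gt0 mulr_gt0 // pi_gt0. Qed.

Lemma phiN (x : R) : phi (- x) = phi x.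
Proof. by rewrite /phi sqrrN. Qed.

Lemma phiB (x c : R) : phi (x - c) = phi x * expR (x * c - c ^+ 2 / 2).
Proof. by rewrite /phi mulrAC -expRD; congr (expR _ / _); field. Qed.

End StandardNormal.

Section Configurations.
Variables (R : realType) (K : nat).
Implicit Types (h : config K) (k : 'I_K).

Definition oppc h : config K := [ffun k => rev_ord (h k)].

Lemma oppcK : involutive oppc.
Proof. by move=> h; apply/ffunP => k; rewrite !ffunE rev_ordK. Qed.

Lemma hval_oppc h k : hval R (oppc h) k = - hval R h k.
Proof.
rewrite /hval ffunE /=; case: (h k) => [[|[|[|n]]] //= _];
  by rewrite !subSS subn0; ring.
Qed.

Lemma norm_hval_le1 h k : `|hval R h k| <= 1.
Proof.
by rewrite /hval; case: (h k) => [[|[|[|n]]] //= _]; apply/ler_normlP; split; lra.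
Qed.

Lemma supp_oppc h : supp R (oppc h) = supp R h.
Proof. by apply/setP => k; rewrite !inE hval_oppc oppr_eq0. Qed.

Lemma in_Ha_oppc h : in_Ha R (oppc h) = in_Ha R h.
Proof.
by rewrite /in_Ha orbC; congr (_ || _); apply: eq_forallb => k;
  rewrite hval_oppc eqr_oppLR ?opprK.
Qed.

Lemma supp_Ha h : in_Ha R h -> supp R h = [set: 'I_K].
Proof.
move=> Ha_h; apply/setP => k; rewrite !inE.
by case/orP: Ha_h => /forallP/(_ k)/eqP ->; rewrite ?oppr_eq0 oner_eq0.
Qed.

Lemma sum_oppc (P : pred (config K)) (F : config K -> R) :
  (forall h, P (oppc h) = P h) -> \sum_(h | P h) F (oppc h) = \sum_(h | P h) F h.
Proof.
move=> P_oppc; rewrite [RHS](reindex_inj (can_inj oppcK)).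
by apply: eq_bigl => h; rewrite P_oppc.
Qed.

End Configurations.

Section DotProduct.
Variables (R : realType) (K : nat).
Implicit Types (x y : 'I_K -> R).

Definition dot x y : R := \sum_k x k * y k.

Lemma dotNr x y : dot x (fun k => - y k) = - dot x y.
Proof. by rewrite /dot -sumrN; apply: eq_bigr => k _; rewrite mulrN. Qed.

Lemma dotBl x x' y : dot x' y - dot x y = dot (fun k => x' k - x k) y.
Proof. by rewrite /dot -sumrB; apply: eq_bigr => k _; rewrite mulrBl. Qed.

Lemma ler_norm_dot x y y' :
  (forall k, 0 <= x k) -> (forall k, `|y k| <= y' k) -> `|dot x y| <= dot x y'.
Proof.
move=> x_ge0 y_le; apply: le_trans (ler_norm_sum _ _ _) _.
by apply: ler_sum => k _; rewrite normrM ger0_norm // ler_wpM2l.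
Qed.

End DotProduct.

Section Mixture.
Variables (R : realType) (K : nat) (M : {set 'I_K} -> nat).
Variables (mu : {set 'I_K} -> nat -> 'I_K -> R) (p : {set 'I_K} -> nat -> R).
Implicit Types (h g : config K) (z : 'I_K -> R).

Definition mean h m k : R := hval R h k * mu (supp R h) m k.

Definition weight h m : R := p (supp R h) m * expR (- (\sum_k mean h m k ^+ 2) / 2).

Definition phi_prod z : R := \prod_k phi (z k).

Lemma phi_prod_gt0 z : 0 < phi_prod z.
Proof. by apply: prodr_gt0 => k _; exact: phi_gt0. Qed.

Definition sym_dens h z : R :=
  \sum_(m < M (supp R h)) weight h m * cosh (dot z (mean h m)).

Lemma dens_hE h z :
  dens_h M mu p h z =
  phi_prod z * \sum_(m < M (supp R h)) weight h m * expR (dot z (mean h m)).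
Proof.
rewrite /dens_h mulr_sumr; apply: eq_bigr => m _.
under eq_bigr => k _ do rewrite phiB.
rewrite big_split /= -expR_sum sumrB -mulr_suml addrC expRD /weight mulNr.
by rewrite /phi_prod /dot /mean; ring.
Qed.

Lemma mean_oppc h m k : mean (oppc h) m k = - mean h m k.
Proof. by rewrite /mean supp_oppc hval_oppc mulNr. Qed.

Lemma weight_oppc h m : weight (oppc h) m = weight h m.
Proof.
by rewrite /weight supp_oppc; under eq_bigr => k _ do rewrite mean_oppc sqrrN.
Qed.

Lemma dens_h_pair h z :
  dens_h M mu p h z + dens_h M mu p (oppc h) z = 2 * phi_prod z * sym_dens h z.
Proof.
rewrite !dens_hE supp_oppc -mulrDr -big_split -[RHS]mulrA [RHS]mulrCA.
rewrite /sym_dens [in RHS]mulr_sumr.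
congr (_ * _); apply: eq_bigr => m _.
have -> : dot z (mean (oppc h) m) = - dot z (mean h m).
  by rewrite -dotNr; congr dot; apply/funext => k; rewrite mean_oppc.
by rewrite /= weight_oppc /cosh; field.
Qed.

Lemma sum_dens_h_sym (P : pred (config K)) z : (forall h, P (oppc h) = P h) ->
  \sum_(h | P h) dens_h M mu p h z = phi_prod z * \sum_(h | P h) sym_dens h z.
Proof.
move=> P_oppc; apply: (@mulfI _ 2); first by rewrite pnatr_eq0.
rewrite mulr_natl mulr2n -{2}(sum_oppc _ P_oppc) -big_split /=.
under eq_bigr do rewrite dens_h_pair.
by rewrite -mulr_sumr mulrA.
Qed.

Lemma dens_h_oppz h z : dens_h M mu p h (fun k => - z k) = dens_h M mu p (oppc h) z.
Proof.
rewrite /dens_h supp_oppc; apply: eq_bigr => m _; congr (_ * _); apply: eq_bigr => k _.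
by rewrite hval_oppc -phiN; congr phi; ring.
Qed.

Lemma sum_dens_h_oppz (P : pred (config K)) z : (forall h, P (oppc h) = P h) ->
  \sum_(h | P h) dens_h M mu p h (fun k => - z k) = \sum_(h | P h) dens_h M mu p h z.
Proof. by move=> P_oppc; under eq_bigr do rewrite dens_h_oppz; exact: sum_oppc. Qed.

Lemma lfdr_oppz z : lfdr M mu p (fun k => - z k) = lfdr M mu p z.
Proof.
rewrite /lfdr (sum_dens_h_oppz (P := xpredT)) //.
by rewrite (sum_dens_h_oppz (P := fun h => ~~ in_Ha R h)) // => h; rewrite in_Ha_oppc.
Qed.

Definition alt_dens z : R := \sum_(h | in_Ha R h) dens_h M mu p h z.

Definition total_dens z : R := \sum_h dens_h M mu p h z.

Lemma lfdrE z : lfdr M mu p z = (total_dens z - alt_dens z) / total_dens z.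
Proof.
have total_split : total_dens z = alt_dens z + \sum_(h | ~~ in_Ha R h) dens_h M mu p h z.
  exact: bigID.
by rewrite /lfdr -/(total_dens z) total_split addrC addrK.
Qed.

Hypothesis mu_supp : forall b m k, (m < M b)%N ->
  (k \notin b -> mu b m k = 0) /\ (k \in b -> 0 < mu b m k).
Hypothesis mu_dom : forall b m m' k, b != [set: 'I_K] ->
  (m < M [set: 'I_K])%N -> (m' < M b)%N -> mu b m' k <= mu [set: 'I_K] m k.
Hypothesis p_ge0 : forall b m, (m < M b)%N -> 0 <= p b m.
Hypothesis p_sum1 : \sum_(h : config K) \sum_(m < M (supp R h)) p (supp R h) m = 1.
Hypothesis M_full : M [set: 'I_K] = 1%N.

Lemma mu_ge0 b m k : (m < M b)%N -> 0 <= mu b m k.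
Proof.
by move=> /(mu_supp k)[mu0 mu_gt0]; case: (boolP (k \in b)) => [/mu_gt0/ltW|/mu0->].
Qed.

Lemma mu_le_full b m k : (m < M b)%N -> mu b m k <= mu [set: 'I_K] 0 k.
Proof.
move=> lt_m; case: (eqVneq b [set: 'I_K]) => [b_full|b_nfull].
  by move: lt_m; rewrite b_full M_full ltnS leqn0 => /eqP->.
by apply: mu_dom; rewrite ?M_full.
Qed.

Lemma norm_mean_le g m k : (m < M (supp R g))%N -> `|mean g m k| <= mu [set: 'I_K] 0 k.
Proof.
move=> lt_m; apply: le_trans (mu_le_full k lt_m).
rewrite normrM (ger0_norm (mu_ge0 k lt_m)).
exact: ler_piMl (mu_ge0 k lt_m) (norm_hval_le1 _ _ _).
Qed.

Lemma weight_ge0 h m : (m < M (supp R h))%N -> 0 <= weight h m.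
Proof. by move=> lt_m; rewrite mulr_ge0 ?p_ge0 ?expR_ge0. Qed.

Lemma sym_dens_Ha h z :
  in_Ha R h -> sym_dens h z = weight h 0 * cosh (dot z (mu [set: 'I_K] 0)).
Proof.
move=> Ha_h; have supp_h := supp_Ha Ha_h.
rewrite /sym_dens supp_h M_full big_ord1 /=; congr (_ * _).
have mean_h k : mean h 0 k = hval R h k * mu [set: 'I_K] 0 k by rewrite /mean supp_h.
case/orP: Ha_h => /forallP hval_h; last rewrite -coshN -dotNr; congr (cosh (dot z _));
  by apply/funext => k; rewrite mean_h (eqP (hval_h k)) ?mul1r ?mulN1r ?opprK.
Qed.

Lemma sym_dens_cross h g z z' : in_Ha R h ->
  (forall k, 0 <= z k) -> (forall k, z k <= z' k) ->
  sym_dens h z * sym_dens g z' <= sym_dens h z' * sym_dens g z.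
Proof.
move=> Ha_h z_ge0 le_zz'.
have weight_h_ge0 : 0 <= weight h 0 by apply: weight_ge0; rewrite supp_Ha // M_full.
rewrite !(sym_dens_Ha _ Ha_h) -!(mulrA (weight h 0)); apply: ler_wpM2l => //.
rewrite /sym_dens !mulr_sumr; apply: ler_sum => m _.
rewrite mulrCA [cosh (dot z' _) * _]mulrCA; apply: ler_wpM2l; first exact: weight_ge0.
have mean_le k := norm_mean_le k (ltn_ord m).
apply: cosh_cross; first exact: ler_norm_dot.
by rewrite !dotBl; apply: ler_norm_dot => // k; rewrite subr_ge0.
Qed.

Lemma alt_total_cross z z' : (forall k, 0 <= z k) -> (forall k, z k <= z' k) ->
  alt_dens z * total_dens z' <= alt_dens z' * total_dens z.
Proof.
move=> z_ge0 le_zz'.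
rewrite /alt_dens /total_dens !(sum_dens_h_sym _ (@in_Ha_oppc R K)).
rewrite !(sum_dens_h_sym (P := xpredT)) //.
rewrite mulrACA [phi_prod z' * _ * _]mulrACA [phi_prod z' * phi_prod z]mulrC.
apply: ler_wpM2l; first by rewrite mulr_ge0 ?ltW ?phi_prod_gt0.
rewrite !mulr_suml; apply: ler_sum => h Ha_h; rewrite !mulr_sumr; apply: ler_sum => g _.
exact: sym_dens_cross.
Qed.

Lemma dens_h_ge0 h z : 0 <= dens_h M mu p h z.
Proof. by apply: sumr_ge0 => m _; rewrite mulr_ge0 ?p_ge0 ?ltW ?phi_prod_gt0. Qed.

Lemma total_dens_gt0 z : 0 < total_dens z.
Proof.
rewrite lt_def sumr_ge0 ?andbT => [|h _]; last exact: dens_h_ge0.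
apply: contra_neq (@oner_neq0 R) => total0; rewrite -p_sum1.
apply: big1 => h _; apply: big1 => m _.
have dens0 : dens_h M mu p h z = 0.
  by apply: (psumr_eq0P _ total0) => // g _; exact: dens_h_ge0.
have term_ge0 (i : 'I_(M (supp R h))) :
    0 <= p (supp R h) i * \prod_k phi (z k - hval R h k * mu (supp R h) i k).
  by rewrite mulr_ge0 ?p_ge0 ?ltW ?phi_prod_gt0.
have /eqP : p (supp R h) m * \prod_k phi (z k - hval R h k * mu (supp R h) m k) = 0.
  by apply: (psumr_eq0P _ dens0) => // i _; exact: term_ge0.
by rewrite mulf_eq0 (gt_eqF (phi_prod_gt0 _)) orbF => /eqP.
Qed.

Lemma lfdr_nonincreasing z z' : (forall k, 0 <= z k) -> (forall k, z k <= z' k) ->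
  lfdr M mu p z' <= lfdr M mu p z.
Proof.
by move=> z_ge0 le_zz'; rewrite !lfdrE ler_compl_ratio ?total_dens_gt0 ?alt_total_cross.
Qed.

End Mixture.

Theorem theorem3 (R : realType) (K : nat) (M : {set 'I_K} -> nat)
    (mu : {set 'I_K} -> nat -> 'I_K -> R) (p : {set 'I_K} -> nat -> R) :
  (2 <= K)%N ->
  r_csmGmm M mu p ->
  forall k : 'I_K,
    (forall z z' : 'I_K -> R,
       (forall j, j != k -> z' j = z j) ->
       (forall j, 0 < z j) -> z k <= z' k ->
       lfdr M mu p z' <= lfdr M mu p z)
    /\
    (forall z z' : 'I_K -> R,
       (forall j, j != k -> z' j = z j) ->
       (forall j, z j < 0) -> z' k <= z k ->
       lfdr M mu p z' <= lfdr M mu p z).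
Proof.
move=> _ [[_ [_ [mu_supp [mu_dom [p_ge0 p_sum1]]]]] M_full] k.
have lfdr_le := lfdr_nonincreasing mu_supp mu_dom p_ge0 p_sum1 M_full.
split=> z z' z'E z_sgn le_zk.
- apply: lfdr_le => j; first exact: ltW.
  by case: (eqVneq j k) => [->|/z'E->].
- rewrite -(lfdr_oppz M mu p z) -(lfdr_oppz M mu p z'); apply: lfdr_le => j.
    by rewrite oppr_ge0 ltW.
  by case: (eqVneq j k) => [->|/z'E->]; rewrite ?lerN2.
Qed.
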